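(* Let $K$ be a field and $f\colon R\to S$ a morphism of Zinbiel algebras. If $H^2_{\mathrm{Zinb}}(f,f)=0$, then $f$ is rigid.
   Context: A Zinbiel algebra over $K$ is a $K$-vector space $R$ with bilinear product $x\cdot y$ (also written $m_R(x,y)$) satisfying $(x\cdot y)\cdot z=x\cdot(y\cdot z)+x\cdot(z\cdot y)$. A morphism $f\colon R\to S$ is a linear map with $f(x\cdot y)=f(x)\cdot f(y)$. $R$ is a bimodule over itself, $S$ over itself, and $S$ is an $R$-bimodule via $r\cdot s=f(r)\cdot s$, $s\cdot r=s\cdot f(r)$. For a bimodule $A$ over $R$ and $1\le n\le4$, $C^n_{\mathrm{Zinb}}(R,A)=\mathrm{Hom}_K(R^{\otimes n},A)$ with $(d^1\varphi)(x,y)=x\cdot\varphi(y)-\varphi(x\cdot y)+\varphi(x)\cdot y$, $(d^2\varphi)(x,y,z)=x\cdot(\varphi(y,z)+\varphi(z,y))-\varphi(x\cdot y,z)+\varphi(x,y\cdot z+z\cdot y)-\varphi(x,y)\cdot z$, $(d^3\varphi)(x,y,z,w)=x\cdot\{\varphi(y,z,w)-\varphi(z,w,y)+\varphi(z,y,w)-\varphi(w,z,y)\}-\varphi(x\cdot y,z,w)+\varphi(x,y\cdot z+z\cdot y,w)-\varphi(x,y,z\cdot w+w\cdot z)+\varphi(x,y,z)\cdot w$. The deformation complex: $C^0_{\mathrm{Zinb}}(R,S)=0$, $d^0=0$, $C^n_{\mathrm{Zinb}}(f,f)=C^n_{\mathrm{Zinb}}(R,R)\times C^n_{\mathrm{Zinb}}(S,S)\times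 C^{n-1}_{\mathrm{Zinb}}(R,S)$ ($1\le n\le4$), $d^i_f(\xi;\pi;\varphi)=(d^i\xi;d^i\pi;f\xi-\pi f-d^{i-1}\varphi)$ with $(f\xi)(x_1,\dots)=f(\xi(x_1,\dots))$, $(\pi f)(x_1,\dots)=\pi(f(x_1),\dots)$. $H^2_{\mathrm{Zinb}}(f,f)=\ker d^2_f/\operatorname{im} d^1_f$. A deformation of $f$ is a formal power series $\Theta_t=\sum_{i\ge0}\theta_it^i$ with $\theta_0=(m_R;m_S;f)$ and $\theta_i=(m_{R,i};m_{S,i};f_i)\in C^2_{\mathrm{Zinb}}(f,f)$, such that for $*=R,S$ the bilinear map $M_{*,t}=\sum_i m_{*,i}t^i$ satisfies $M_{*,t}(M_{*,t}(x,y),z)=M_{*,t}(x,M_{*,t}(y,z))+M_{*,t}(x,M_{*,t}(z,y))$, and $F_t=\sum_if_it^i$ satisfies $F_t(M_{R,t}(x,y))=M_{S,t}(F_t(x),F_t(y))$. A formal isomorphism of $f$ is $\Phi_t=(\Phi_{R,t};\Phi_{S,t})=\sum_{i\ge0}(\phi_{R,i};\phi_{S,i})t^i$ with $(\phi_{R,0};\phi_{S,0})=(\mathrm{Id}_R;\mathrm{Id}_S)$ and $\phi_{R,i}\in\mathrm{Hom}_K(R,R)$, $\phi_{S,i}\in\mathrm{Hom}_K(S,S)$. Deformations $\Theta_t=(M_{R,t};M_{S,t};F_t)$ and $\overline{\Theta}_t=(\overline{M}_{R,t};\overline{M}_{S,t};\overline{F}_t)$ are equivalent if for some formal isomorphism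 $\Phi_t$: $\overline{M}_{R,t}=\Phi_{R,t}M_{R,t}\Phi_{R,t}^{-1}$ (meaning $(x,y)\mapsto\Phi_{R,t}(M_{R,t}(\Phi_{R,t}^{-1}x,\Phi_{R,t}^{-1}y))$), likewise for $S$, and $\overline{F}_t=\Phi_{S,t}F_t\Phi_{R,t}^{-1}$. The trivial deformation is $\Theta_t=\theta_0=(m_R;m_S;f)$. The morphism $f$ is rigid if every deformation of $f$ is equivalent to the trivial deformation. *)

From HB Require Import structures.
From mathcomp Require Import all_boot all_order all_algebra.
Set Implicit Arguments. Unset Strict Implicit. Unset Printing Implicit Defensive.
Import GRing.Theory.
Local Open Scope ring_scope.

Section Zinbiel.
Variable K : fieldType.

Definition lin1 (U V : lmodType K) (g : U -> V) : Prop :=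
  forall (a : K) (x y : U), g (a *: x + y) = a *: g x + g y.

Definition bilin (U V : lmodType K) (m : U -> U -> V) : Prop :=
  (forall x, lin1 (m x)) /\ (forall y, lin1 (fun x => m x y)).

Definition zinbiel_id (U : lmodType K) (m : U -> U -> U) : Prop :=
  forall x y z, m (m x y) z = m x (m y z) + m x (m z y).

Definition zinbiel_alg (U : lmodType K) (m : U -> U -> U) : Prop :=
  bilin m /\ zinbiel_id m.

Definition zinb_morph (R S : lmodType K) (mR : R -> R -> R) (mS : S -> S -> S)
  (f : R -> S) : Prop :=
  lin1 f /\ forall x y, f (mR x y) = mS (f x) (f y).

(* Zinbiel coboundaries d^1, d^2 with values in a bimodule A over (R, mR),
   with left action la and right action ra. *)
Definition d1 (R A : lmodType K) (mR : R -> R -> R)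
  (la : R -> A -> A) (ra : A -> R -> A) (phi : R -> A) : R -> R -> A :=
  fun x y => la x (phi y) - phi (mR x y) + ra (phi x) y.

Definition d2 (R A : lmodType K) (mR : R -> R -> R)
  (la : R -> A -> A) (ra : A -> R -> A) (phi : R -> R -> A) : R -> R -> R -> A :=
  fun x y z => la x (phi y z + phi z y) - phi (mR x y) z
               + phi x (mR y z + mR z y) - ra (phi x y) z.

(* H^2_Zinb(f,f) = 0 : every 2-cocycle (xi; pi; phi) of C^*_Zinb(f,f)
   is a coboundary d^1_f(xi'; pi'; 0)  (C^0_Zinb(R,S) = 0, d^0 = 0). *)
Definition H2_vanishes (R S : lmodType K) (mR : R -> R -> R) (mS : S -> S -> S)
  (f : R -> S) : Prop :=
  forall (xi : R -> R -> R) (pi : S -> S -> S) (phi : R -> S),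
    bilin xi -> bilin pi -> lin1 phi ->
    (forall x y z, d2 mR mR mR xi x y z = 0) ->
    (forall x y z, d2 mS mS mS pi x y z = 0) ->
    (forall x y, f (xi x y) - pi (f x) (f y)
                 - d1 mR (fun r s => mS (f r) s) (fun s r => mS s (f r)) phi x y = 0) ->
    exists (xi' : R -> R) (pi' : S -> S),
      [/\ lin1 xi', lin1 pi',
          (forall x y, d1 mR mR mR xi' x y = xi x y),
          (forall x y, d1 mS mS mS pi' x y = pi x y) &
          (forall x, f (xi' x) - pi' (f x) - 0 = phi x)].

(* coefficient n of M_t(M_t(x,y),z) = M_t(x,M_t(y,z)) + M_t(x,M_t(z,y)) *)
Definition series_zinbiel (U : lmodType K) (mt : nat -> U -> U -> U) : Prop :=
  forall n x y z,
    \sum_(i < n.+1) mt i (mt (n - i)%N x y) z =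
    \sum_(i < n.+1) (mt i x (mt (n - i)%N y z) + mt i x (mt (n - i)%N z y)).

(* coefficient n of F_t(M_{R,t}(x,y)) = M_{S,t}(F_t x, F_t y) *)
Definition series_morph (R S : lmodType K) (mRt : nat -> R -> R -> R)
  (mSt : nat -> S -> S -> S) (ft : nat -> R -> S) : Prop :=
  forall n x y,
    \sum_(i < n.+1) ft i (mRt (n - i)%N x y) =
    \sum_(i < n.+1) \sum_(j < (n - i).+1) mSt i (ft j x) (ft (n - i - j)%N y).

(* Theta_t = sum_i (m_{R,i}; m_{S,i}; f_i) t^i is a deformation of f *)
Definition is_deformation (R S : lmodType K) (mR : R -> R -> R) (mS : S -> S -> S)
  (f : R -> S) (mRt : nat -> R -> R -> R) (mSt : nat -> S -> S -> S)
  (ft : nat -> R -> S) : Prop :=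
  mRt 0%N = mR /\ mSt 0%N = mS /\ ft 0%N = f /\
  (forall i, bilin (mRt i) /\ bilin (mSt i) /\ lin1 (ft i)) /\
  series_zinbiel mRt /\ series_zinbiel mSt /\ series_morph mRt mSt ft.

(* formal power series sum_i phi_i t^i with phi_0 = Id, phi_i in Hom_K(U,U) *)
Definition formal_iso (U : lmodType K) (Phi : nat -> U -> U) : Prop :=
  (forall x, Phi 0%N x = x) /\ (forall i, lin1 (Phi i)).

Definition inverse_series (U : lmodType K) (Phi Psi : nat -> U -> U) : Prop :=
  (forall i, lin1 (Psi i)) /\
  (forall n x, \sum_(i < n.+1) Phi i (Psi (n - i)%N x) = (if n is 0%N then x else 0)) /\
  (forall n x, \sum_(i < n.+1) Psi i (Phi (n - i)%N x) = (if n is 0%N then x else 0)).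

(* coefficient n of Phi_t M_t (Psi_t x, Psi_t y) *)
Definition conj2 (U : lmodType K) (Phi : nat -> U -> U) (Mt : nat -> U -> U -> U)
  (Psi : nat -> U -> U) (n : nat) (x y : U) : U :=
  \sum_(a < n.+1) \sum_(b < (n - a).+1) \sum_(c < (n - a - b).+1)
     Phi a (Mt b (Psi c x) (Psi (n - a - b - c)%N y)).

(* coefficient n of Phi_{S,t} F_t Psi_{R,t} x *)
Definition conj1 (R S : lmodType K) (PhiS : nat -> S -> S) (Ft : nat -> R -> S)
  (PsiR : nat -> R -> R) (n : nat) (x : R) : S :=
  \sum_(a < n.+1) \sum_(b < (n - a).+1) PhiS a (Ft b (PsiR (n - a - b)%N x)).

Definition deform_equiv (R S : lmodType K)
  (mRt : nat -> R -> R -> R) (mSt : nat -> S -> S -> S) (ft : nat -> R -> S)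
  (mRb : nat -> R -> R -> R) (mSb : nat -> S -> S -> S) (fb : nat -> R -> S) : Prop :=
  exists (PhiR PsiR : nat -> R -> R) (PhiS PsiS : nat -> S -> S),
    formal_iso PhiR /\ formal_iso PhiS /\
    inverse_series PhiR PsiR /\ inverse_series PhiS PsiS /\
    (forall n x y, mRb n x y = conj2 PhiR mRt PsiR n x y) /\
    (forall n x y, mSb n x y = conj2 PhiS mSt PsiS n x y) /\
    (forall n x, fb n x = conj1 PhiS ft PsiR n x).

Definition triv2 (U : lmodType K) (m : U -> U -> U) : nat -> U -> U -> U :=
  fun n => if n is 0%N then m else fun _ _ => 0.
Definition triv1 (R S : lmodType K) (f : R -> S) : nat -> R -> S :=
  fun n => if n is 0%N then f else fun _ => 0.

Definition rigid (R S : lmodType K) (mR : R -> R -> R) (mS : S -> S -> S)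
  (f : R -> S) : Prop :=
  forall mRt mSt ft, is_deformation mR mS f mRt mSt ft ->
    deform_equiv mRt mSt ft (triv2 mR) (triv2 mS) (triv1 f).

End Zinbiel.

(* A formal power series over U is encoded by its coefficient sequence
   [nat -> U]; a series of linear (or bilinear) maps acts on such sequences by
   Cauchy product, and the resulting operators are K[[t]]-linear ([tlinear]:
   K-linear and commuting with multiplication by t).  Two K[[t]]-linear
   operators that agree on constant series agree everywhere, so the
   coefficientwise equations of a deformation become operator identities,
   which are visibly preserved by conjugation with a formal isomorphism.

   If a conjugated deformation is trivial in degrees 1..n, its coefficients of
   degree n+1 form a 2-cocycle of C_Zinb(f,f).  Since H^2 vanishes, this
   cocycle is the coboundary d^1_f(q_R; q_S; 0), and conjugating further by
   Id + q t^(n+1) makes the deformation trivial up to degree n+1 without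
   changing the isomorphism in degrees <= n.  The coefficientwise limit of
   these isomorphisms is an equivalence with the trivial deformation. *)

From HB Require Import structures.
From mathcomp Require Import all_boot all_order all_algebra.
From Stdlib Require Import FunctionalExtensionality ClassicalEpsilon.
Set Implicit Arguments. Unset Strict Implicit. Unset Printing Implicit Defensive.
Import GRing.Theory.
Local Open Scope ring_scope.

Section LinearMaps.
Variable K : fieldType.
Implicit Types U V W : lmodType K.

Lemma lin1_0 U V (g : U -> V) : lin1 g -> g 0 = 0.
Proof.
move=> lg; have := lg 1 0 0; rewrite scale1r addr0 scale1r => g0.
by apply/eqP; rewrite -(subrr (g 0)) {2}g0 addrK.
Qed.

Lemma lin1D U V (g : U -> V) x y : lin1 g -> g (x + y) = g x + g y.
Proof. by move=> lg; rewrite -{1}(scale1r x) lg scale1r. Qed.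

Lemma lin1N U V (g : U -> V) x : lin1 g -> g (- x) = - g x.
Proof.
move=> lg; rewrite -scaleN1r -(addr0 (-1 *: x)) lg lin1_0 //.
by rewrite addr0 scaleN1r.
Qed.

Lemma lin1_sum U V (g : U -> V) I (r : seq I) (P : pred I) (F : I -> U) :
  lin1 g -> g (\sum_(i <- r | P i) F i) = \sum_(i <- r | P i) g (F i).
Proof. by move=> lg; apply: (big_morph g (fun x y => lin1D x y lg) (lin1_0 lg)). Qed.

Lemma lin1_sum_fun U V I (r : seq I) (P : pred I) (F : I -> U -> V) :
  (forall i, lin1 (F i)) -> lin1 (fun x => \sum_(i <- r | P i) F i x).
Proof.
move=> lF a x y; rewrite scaler_sumr -big_split /=.
by apply: eq_bigr => i _; rewrite lF.
Qed.

Lemma lin1_comp U V W (g : V -> W) (h : U -> V) :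
  lin1 g -> lin1 h -> lin1 (fun x => g (h x)).
Proof. by move=> lg lh a x y; rewrite lh lg. Qed.

Lemma lin1_opp U V (g : U -> V) : lin1 g -> lin1 (fun x => - g x).
Proof. by move=> lg a x y; rewrite lg opprD scalerN. Qed.

Lemma lin1_id U : lin1 (fun x : U => x).
Proof. by []. Qed.

Lemma lin1_0fun U V : lin1 (fun _ : U => 0 : V).
Proof. by move=> a x y; rewrite scaler0 addr0. Qed.

Lemma bilin0l U V (B : U -> U -> V) y : bilin B -> B 0 y = 0.
Proof. by move=> bB; apply: (lin1_0 (bB.2 y)). Qed.

Lemma bilin0r U V (B : U -> U -> V) x : bilin B -> B x 0 = 0.
Proof. by move=> bB; apply: (lin1_0 (bB.1 x)). Qed.

End LinearMaps.

Section FormalSeries.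
Variable K : fieldType.
Implicit Types U V W : lmodType K.

Definition ser_cst U (x : U) : nat -> U := fun n => if n is 0%N then x else 0.
Definition ser_shift U (u : nat -> U) : nat -> U := fun n => if n is m.+1 then u m else 0.
Definition ser_comb U (a : K) (u v : nat -> U) : nat -> U := fun n => a *: u n + v n.
Definition cauchy U (c : nat -> nat -> U) : nat -> U := fun n => \sum_(i < n.+1) c i (n - i)%N.

Definition tlinear U V (A : (nat -> U) -> nat -> V) : Prop :=
  (forall a u v, A (ser_comb a u v) = ser_comb a (A u) (A v)) /\
  (forall u, A (ser_shift u) = ser_shift (A u)).

Lemma ser_decomp U (u : nat -> U) :
  u = ser_comb 1 (ser_cst (u 0%N)) (ser_shift (fun n => u n.+1)).
Proof.
by apply: functional_extensionality => -[|n]; rewrite /ser_comb /= scale1r ?addr0 ?scaler0 ?add0r.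
Qed.

Lemma ser_cst_comb U a (x y : U) : ser_cst (a *: x + y) = ser_comb a (ser_cst x) (ser_cst y).
Proof. by apply: functional_extensionality => -[|n]; rewrite /ser_comb //= scaler0 addr0. Qed.

Lemma tlinear_eq U V (A B : (nat -> U) -> nat -> V) : tlinear A -> tlinear B ->
  (forall x, A (ser_cst x) = B (ser_cst x)) -> forall u, A u = B u.
Proof.
move=> [cA sA] [cB sB] eqAB u; apply: functional_extensionality => n.
elim: n u => [|n IHn] u; rewrite (ser_decomp u) cA cB sA sB /ser_comb /= eqAB //.
by rewrite IHn.
Qed.

Lemma tlinear2_eq U1 U2 V (A B : (nat -> U1) -> (nat -> U2) -> nat -> V) :
  (forall v, tlinear (A^~ v)) -> (forall u, tlinear (A u)) ->
  (forall v, tlinear (B^~ v)) -> (forall u, tlinear (B u)) ->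
  (forall x y, A (ser_cst x) (ser_cst y) = B (ser_cst x) (ser_cst y)) ->
  forall u v, A u v = B u v.
Proof.
move=> lA1 lA2 lB1 lB2 eqAB u v.
apply: (tlinear_eq (A := A^~ v) (B := B^~ v)) => // x.
exact: tlinear_eq.
Qed.

Lemma tlinear3_eq U1 U2 U3 V (A B : (nat -> U1) -> (nat -> U2) -> (nat -> U3) -> nat -> V) :
  (forall v w, tlinear (fun u => A u v w)) -> (forall u w, tlinear (fun v => A u v w)) ->
  (forall u v, tlinear (A u v)) ->
  (forall v w, tlinear (fun u => B u v w)) -> (forall u w, tlinear (fun v => B u v w)) ->
  (forall u v, tlinear (B u v)) ->
  (forall x y z, A (ser_cst x) (ser_cst y) (ser_cst z) = B (ser_cst x) (ser_cst y) (ser_cst z)) ->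
  forall u v w, A u v w = B u v w.
Proof.
move=> lA1 lA2 lA3 lB1 lB2 lB3 eqAB u v w.
apply: (tlinear_eq (A := fun u => A u v w) (B := fun u => B u v w)) => // x.
exact: (tlinear2_eq (A := A (ser_cst x)) (B := B (ser_cst x))).
Qed.

Lemma tlinear_comp U V W (A : (nat -> V) -> nat -> W) (B : (nat -> U) -> nat -> V) :
  tlinear A -> tlinear B -> tlinear (fun u => A (B u)).
Proof. by move=> [cA sA] [cB sB]; split=> *; rewrite ?cB ?cA ?sB ?sA. Qed.

Lemma tlinear_add U V (A B : (nat -> U) -> nat -> V) :
  tlinear A -> tlinear B -> tlinear (fun u => ser_comb 1 (A u) (B u)).
Proof.
move=> [cA sA] [cB sB]; split=> *; rewrite ?cA ?cB ?sA ?sB;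
  apply: functional_extensionality => n; rewrite /ser_comb.
  by rewrite !scale1r scalerDr addrACA.
by case: n => //=; rewrite scaler0 addr0.
Qed.

Lemma cauchy0 U (c : nat -> nat -> U) : cauchy c 0%N = c 0%N 0%N.
Proof. by rewrite /cauchy big_ord1. Qed.

Lemma cauchy_first U (c : nat -> nat -> U) n :
  (forall i k, (0 < i)%N -> c i k = 0) -> cauchy c n = c 0%N n.
Proof. by move=> c0; rewrite /cauchy big_ord_recl subn0 big1 ?addr0 // => i _; apply: c0. Qed.

Lemma cauchy_last U (c : nat -> nat -> U) n :
  (forall i k, (0 < k)%N -> c i k = 0) -> cauchy c n = c n 0%N.
Proof.
move=> c0; rewrite /cauchy big_ord_recr /= subnn big1 ?add0r // => i _.
by apply: c0; rewrite subn_gt0.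
Qed.

Lemma cauchy_comb U a (c d : nat -> nat -> U) :
  cauchy (fun i => ser_comb a (c i) (d i)) = ser_comb a (cauchy c) (cauchy d).
Proof.
by apply: functional_extensionality => n; rewrite /cauchy /ser_comb big_split /= scaler_sumr.
Qed.

Lemma cauchy_shiftr U (c : nat -> nat -> U) :
  cauchy (fun i => ser_shift (c i)) = ser_shift (cauchy c).
Proof.
apply: functional_extensionality => -[|n]; rewrite /cauchy; first by rewrite big_ord1.
rewrite big_ord_recr /= subnn addr0; apply: eq_bigr => i _.
by rewrite subSn // -ltnS.
Qed.

Lemma cauchy_shiftl U (c : nat -> nat -> U) : (forall k, c 0%N k = 0) ->
  cauchy c = ser_shift (cauchy (fun i => c i.+1)).
Proof.
move=> c0; apply: functional_extensionality => -[|n]; rewrite /cauchy; first by rewrite big_ord1.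
by rewrite big_ord_recl c0 add0r.
Qed.

End FormalSeries.

Section SeriesOperators.
Variable K : fieldType.
Implicit Types U V W : lmodType K.

Definition ser_map U V (Phi : nat -> U -> V) (u : nat -> U) : nat -> V :=
  cauchy (fun i k => Phi i (u k)).
Definition ser_mul U V (B : U -> U -> V) (u v : nat -> U) : nat -> V :=
  cauchy (fun j k => B (u j) (v k)).
Definition ser_bimap U V (M : nat -> U -> U -> V) (u v : nat -> U) : nat -> V :=
  cauchy (fun i => ser_mul (M i) u v).

Lemma ser_map_tlinear U V (Phi : nat -> U -> V) :
  (forall i, lin1 (Phi i)) -> tlinear (ser_map Phi).
Proof.
move=> lPhi; split=> [a u v|u]; rewrite /ser_map.
  rewrite -cauchy_comb; congr cauchy; apply: functional_extensionality => i.
  by apply: functional_extensionality => k; rewrite /ser_comb lPhi.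
rewrite -cauchy_shiftr; congr cauchy; apply: functional_extensionality => i.
by apply: functional_extensionality => -[|k] //=; rewrite lin1_0.
Qed.

Lemma ser_map_cst U V (Phi : nat -> U -> V) x :
  (forall i, lin1 (Phi i)) -> ser_map Phi (ser_cst x) = fun n => Phi n x.
Proof.
move=> lPhi; apply: functional_extensionality => n.
by rewrite /ser_map cauchy_last // => i [|k] //= _; rewrite lin1_0.
Qed.

Lemma ser_map0 U V (Phi : nat -> U -> V) u : ser_map Phi u 0%N = Phi 0%N (u 0%N).
Proof. exact: cauchy0. Qed.

Lemma ser_mul_tlinear_l U V (B : U -> U -> V) v : bilin B -> tlinear (ser_mul B ^~ v).
Proof.
move=> bB; split=> [a u u'|u]; rewrite /ser_mul.
  rewrite -cauchy_comb; congr cauchy; apply: functional_extensionality => j.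
  by apply: functional_extensionality => k; rewrite /ser_comb (bB.2 (v k)).
by rewrite cauchy_shiftl //= => k; apply: bilin0l.
Qed.

Lemma ser_mul_tlinear_r U V (B : U -> U -> V) u : bilin B -> tlinear (ser_mul B u).
Proof.
move=> bB; split=> [a v v'|v]; rewrite /ser_mul.
  rewrite -cauchy_comb; congr cauchy; apply: functional_extensionality => j.
  by apply: functional_extensionality => k; rewrite /ser_comb bB.1.
rewrite -cauchy_shiftr; congr cauchy; apply: functional_extensionality => j.
by apply: functional_extensionality => -[|k] //=; rewrite bilin0r.
Qed.

Lemma ser_mul_cstl U V (B : U -> U -> V) x v n :
  bilin B -> ser_mul B (ser_cst x) v n = B x (v n).
Proof.
move=> bB; rewrite /ser_mul cauchy_first ?subn0 // => -[|i] k //= _.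
exact: bilin0l.
Qed.

Lemma ser_mul_cstr U V (B : U -> U -> V) u z n :
  bilin B -> ser_mul B u (ser_cst z) n = B (u n) z.
Proof.
by move=> bB; rewrite /ser_mul cauchy_last // => i [|k] //= _; rewrite bilin0r.
Qed.

Lemma ser_bimap_tlinear_l U V (M : nat -> U -> U -> V) v :
  (forall i, bilin (M i)) -> tlinear (ser_bimap M ^~ v).
Proof.
move=> bM; split=> [a u u'|u]; rewrite /ser_bimap.
  rewrite -cauchy_comb; congr cauchy; apply: functional_extensionality => i.
  exact: (ser_mul_tlinear_l v (bM i)).1.
rewrite -cauchy_shiftr; congr cauchy; apply: functional_extensionality => i.
exact: (ser_mul_tlinear_l v (bM i)).2.
Qed.

Lemma ser_bimap_tlinear_r U V (M : nat -> U -> U -> V) u :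
  (forall i, bilin (M i)) -> tlinear (ser_bimap M u).
Proof.
move=> bM; split=> [a v v'|v]; rewrite /ser_bimap.
  rewrite -cauchy_comb; congr cauchy; apply: functional_extensionality => i.
  exact: (ser_mul_tlinear_r u (bM i)).1.
rewrite -cauchy_shiftr; congr cauchy; apply: functional_extensionality => i.
exact: (ser_mul_tlinear_r u (bM i)).2.
Qed.

Lemma ser_bimap_cstl U V (M : nat -> U -> U -> V) x v n : (forall i, bilin (M i)) ->
  ser_bimap M (ser_cst x) v n = \sum_(i < n.+1) M i x (v (n - i)%N).
Proof. by move=> bM; apply: eq_bigr => i _; rewrite ser_mul_cstl. Qed.

Lemma ser_bimap_cstr U V (M : nat -> U -> U -> V) u z n : (forall i, bilin (M i)) ->
  ser_bimap M u (ser_cst z) n = \sum_(i < n.+1) M i (u (n - i)%N) z.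
Proof. by move=> bM; apply: eq_bigr => i _; rewrite ser_mul_cstr. Qed.

Lemma ser_bimap_cst U V (M : nat -> U -> U -> V) x y : (forall i, bilin (M i)) ->
  ser_bimap M (ser_cst x) (ser_cst y) = fun n => M n x y.
Proof.
move=> bM; apply: functional_extensionality => n.
rewrite /ser_bimap cauchy_last; first by rewrite ser_mul_cstl.
by move=> i [|k] // _; rewrite ser_mul_cstl //= bilin0r.
Qed.

Lemma ser_bimap0 U V (M : nat -> U -> U -> V) u v :
  ser_bimap M u v 0%N = M 0%N (u 0%N) (v 0%N).
Proof. by rewrite /ser_bimap cauchy0 /ser_mul cauchy0. Qed.

Definition ser_comp U V W (Phi : nat -> V -> W) (Psi : nat -> U -> V) : nat -> U -> W :=
  fun n x => ser_map Phi (fun k => Psi k x) n.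

Lemma ser_comp_lin1 U V W (Phi : nat -> V -> W) (Psi : nat -> U -> V) n :
  (forall i, lin1 (Phi i)) -> (forall i, lin1 (Psi i)) -> lin1 (ser_comp Phi Psi n).
Proof.
move=> lPhi lPsi a x y; rewrite /ser_comp.
have -> : (fun k => Psi k (a *: x + y)) = ser_comb a (fun k => Psi k x) (fun k => Psi k y).
  by apply: functional_extensionality => k; rewrite lPsi.
by rewrite (ser_map_tlinear lPhi).1.
Qed.

Lemma ser_map_comp U V W (Phi : nat -> V -> W) (Psi : nat -> U -> V) u :
  (forall i, lin1 (Phi i)) -> (forall i, lin1 (Psi i)) ->
  ser_map (ser_comp Phi Psi) u = ser_map Phi (ser_map Psi u).
Proof.
move=> lPhi lPsi; have lC i := ser_comp_lin1 i lPhi lPsi.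
apply: (tlinear_eq (A := ser_map _) (B := fun u => ser_map Phi (ser_map Psi u))).
- exact: ser_map_tlinear.
- by apply: tlinear_comp; apply: ser_map_tlinear.
by move=> x; rewrite !ser_map_cst.
Qed.

End SeriesOperators.

Section ConstUpTo.
Variables (K : fieldType) (U V : lmodType K) (n : nat).

Definition const_upto (W : lmodType K) (u : nat -> W) := forall k, (0 < k <= n)%N -> u k = 0.
Definition const_upto_map (G : nat -> U -> V) :=
  forall i, (0 < i <= n)%N -> forall x, G i x = 0.
Definition const_upto_bimap (D : nat -> U -> U -> V) :=
  forall i, (0 < i <= n)%N -> forall x y, D i x y = 0.

Lemma const_upto_cst (W : lmodType K) (x : W) : const_upto (ser_cst x).
Proof. by case. Qed.

Lemma const_upto_cauchy (c : nat -> nat -> V) :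
  (forall i k, (0 < i + k <= n)%N -> c i k = 0) -> const_upto (cauchy c).
Proof.
move=> c0 k kn; rewrite /cauchy big1 // => i _; apply: c0.
by rewrite subnKC // -ltnS.
Qed.

Lemma cauchy_next (c : nat -> nat -> V) :
  (forall i k, (0 < i <= n)%N -> (0 < k <= n)%N -> c i k = 0) ->
  cauchy c n.+1 = c 0%N n.+1 + c n.+1 0%N.
Proof.
move=> c0; rewrite /cauchy big_ord_recl big_ord_recr /= subn0 big1 ?add0r.
  by rewrite /bump leq0n add1n subnn.
move=> i _; apply: c0; rewrite /bump leq0n add1n /= ?ltn_ord //.
by rewrite subSS subn_gt0 ltn_ord /= leq_subr.
Qed.

Lemma const_upto_ser_mul (B : U -> U -> V) u v : bilin B ->
  const_upto u -> const_upto v -> const_upto (ser_mul B u v).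
Proof.
move=> bB cu cv; apply: const_upto_cauchy => -[|j] k /andP[/= jk0 jkn].
  by rewrite cv ?jk0 // bilin0r.
by rewrite cu ?bilin0l // (leq_trans _ jkn) // leq_addr.
Qed.

Lemma const_upto_ser_map (G : nat -> U -> V) w : (forall i, lin1 (G i)) ->
  const_upto_map G -> const_upto w -> const_upto (ser_map G w).
Proof.
move=> lG cG cw; apply: const_upto_cauchy => -[|i] k /andP[/= ik0 ikn].
  by rewrite cw ?ik0 // lin1_0.
by rewrite cG // (leq_trans _ ikn) // leq_addr.
Qed.

Lemma const_upto_ser_bimap (D : nat -> U -> U -> V) u v : (forall i, bilin (D i)) ->
  const_upto_bimap D -> const_upto u -> const_upto v -> const_upto (ser_bimap D u v).
Proof.
move=> bD cD cu cv; apply: const_upto_cauchy => -[|i] k /andP[/= ik0 ikn].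
  by apply: const_upto_ser_mul => //; rewrite ik0.
rewrite /ser_mul /cauchy big1 // => j _.
by rewrite cD //= (leq_trans _ ikn) // leq_addr.
Qed.

Lemma ser_map_next (G : nat -> U -> V) w : (forall i, lin1 (G i)) ->
  const_upto_map G -> const_upto w ->
  ser_map G w n.+1 = G 0%N (w n.+1) + G n.+1 (w 0%N).
Proof. by move=> lG cG cw; rewrite /ser_map cauchy_next // => i k i0 k0; rewrite cG. Qed.

Lemma ser_mul_next (B : U -> U -> V) u v : bilin B -> const_upto u -> const_upto v ->
  ser_mul B u v n.+1 = B (u 0%N) (v n.+1) + B (u n.+1) (v 0%N).
Proof.
by move=> bB cu cv; rewrite /ser_mul cauchy_next // => i k i0 k0; rewrite cu // bilin0l.
Qed.

Lemma ser_bimap_next (D : nat -> U -> U -> V) u v : (forall i, bilin (D i)) ->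
  const_upto_bimap D -> const_upto u -> const_upto v ->
  ser_bimap D u v n.+1 =
    D 0%N (u 0%N) (v n.+1) + D 0%N (u n.+1) (v 0%N) + D n.+1 (u 0%N) (v 0%N).
Proof.
move=> bD cD cu cv; rewrite /ser_bimap cauchy_next.
  by rewrite ser_mul_next // /ser_mul cauchy0.
by move=> i k i0 k0; rewrite /ser_mul /cauchy big1 // => j _; rewrite cD.
Qed.

End ConstUpTo.

Lemma triv2_const_upto (K : fieldType) (U : lmodType K) (D : nat -> U -> U -> U) n :
  const_upto_bimap n D -> triv2 (D 0%N) n =2 D n.
Proof. by case: n => [|m] cD x y //; rewrite cD /=. Qed.

Lemma triv1_const_upto (K : fieldType) (U V : lmodType K) (G : nat -> U -> V) n :
  const_upto_map n G -> triv1 (G 0%N) n =1 G n.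
Proof. by case: n => [|m] cG x //; rewrite cG /=. Qed.

Section FormalIsomorphisms.
Variables (K : fieldType) (U : lmodType K).
Implicit Types (Phi : nat -> U -> U) (q : U -> U).

Definition ser_id : nat -> U -> U := fun n x => if n is 0%N then x else 0.

Lemma formal_iso_id : formal_iso ser_id.
Proof. by split=> // -[|i]; [apply: lin1_id | apply: lin1_0fun]. Qed.

(* [inv_upto Phi n] holds the coefficients of degree <= n of the inverse; this
   encodes the strong recursion psi_(m+1) = - \sum_(i <= m) phi_(i+1) psi_(m-i). *)
Fixpoint inv_upto Phi (n : nat) : nat -> U -> U :=
  match n with
  | 0 => fun _ x => x
  | m.+1 => fun k x => if k == m.+1
                       then - \sum_(i < m.+1) Phi i.+1 (inv_upto Phi m (m - i) x)
                       else inv_upto Phi m k x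
  end.

Definition ser_inv Phi (k : nat) : U -> U := inv_upto Phi k k.

Lemma inv_upto_stable Phi n k : (k <= n)%N -> inv_upto Phi n k = ser_inv Phi k.
Proof.
elim: n => [|n IHn] kn; first by move: kn; rewrite leqn0 => /eqP ->.
have [-> //|kSn] := eqVneq k n.+1.
rewrite -IHn; last by rewrite -ltnS ltn_neqAle kSn kn.
by apply: functional_extensionality => x /=; rewrite ifN.
Qed.

Lemma ser_invS Phi m x :
  ser_inv Phi m.+1 x = - \sum_(i < m.+1) Phi i.+1 (ser_inv Phi (m - i) x).
Proof.
rewrite /ser_inv /= eqxx; congr (- _); apply: eq_bigr => i _.
by rewrite inv_upto_stable // leq_subr.
Qed.

Lemma ser_inv_lin1 Phi : (forall i, lin1 (Phi i)) -> forall k, lin1 (ser_inv Phi k).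
Proof.
move=> lPhi; elim/ltn_ind => -[|m] IHm; first exact: lin1_id.
have -> : ser_inv Phi m.+1 = fun x => - \sum_(i < m.+1) Phi i.+1 (ser_inv Phi (m - i) x).
  by apply: functional_extensionality => x; rewrite ser_invS.
apply/lin1_opp/lin1_sum_fun => i; apply: lin1_comp => //.
by apply: IHm; rewrite ltnS leq_subr.
Qed.

Lemma eq_ser_inv Phi Phi' N :
  (forall i, (i <= N)%N -> Phi i =1 Phi' i) ->
  forall k, (k <= N)%N -> ser_inv Phi k =1 ser_inv Phi' k.
Proof.
move=> ePhi; elim/ltn_ind => -[//|m] IHm mN x.
rewrite !ser_invS; congr (- _); apply: eq_bigr => i _.
rewrite IHm ?ltnS ?leq_subr ?ePhi //; first by rewrite (leq_trans _ mN) // ltnS -ltnS.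
by rewrite (leq_trans (leq_subr _ _)) // ltnW.
Qed.

Lemma ser_map_inv_cst Phi x n : formal_iso Phi ->
  ser_map Phi (fun k => ser_inv Phi k x) n = ser_cst x n.
Proof.
move=> [Phi0 _]; case: n => [|m]; first by rewrite ser_map0 Phi0.
rewrite /ser_map /cauchy big_ord_recl Phi0 subn0 ser_invS /=.
rewrite addrC; apply/eqP; rewrite subr_eq0; apply/eqP.
by apply: eq_bigr => i _; rewrite subSS.
Qed.

Lemma formal_iso_inv Phi : formal_iso Phi -> formal_iso (ser_inv Phi).
Proof. by move=> [Phi0 lPhi]; split=> //; apply: ser_inv_lin1. Qed.

Lemma ser_map_invK Phi : formal_iso Phi -> cancel (ser_map (ser_inv Phi)) (ser_map Phi).
Proof.
move=> isoPhi; have [_ lPhi] := isoPhi; have lInv := ser_inv_lin1 lPhi.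
apply: (tlinear_eq (A := fun u => ser_map Phi (ser_map (ser_inv Phi) u)) (B := id)).
- by apply: tlinear_comp; apply: ser_map_tlinear.
- by [].
move=> x; rewrite ser_map_cst //.
by apply: functional_extensionality => n; rewrite ser_map_inv_cst.
Qed.

(* The right inverse [ser_inv Phi] has itself a right inverse, which must be Phi. *)
Lemma ser_mapK Phi : formal_iso Phi -> cancel (ser_map Phi) (ser_map (ser_inv Phi)).
Proof.
move=> isoPhi u; have isoInv := formal_iso_inv isoPhi.
have PhiE w : ser_map Phi w = ser_map (ser_inv (ser_inv Phi)) w.
  by rewrite -{1}(ser_map_invK isoInv w) ser_map_invK.
by rewrite PhiE ser_map_invK.
Qed.

Lemma inverse_series_inv Phi : formal_iso Phi -> inverse_series Phi (ser_inv Phi).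
Proof.
move=> isoPhi; have [_ lPhi] := isoPhi; have lInv := ser_inv_lin1 lPhi.
split=> //; split=> n x; first exact: ser_map_inv_cst.
by have := congr1 (fun s => s n) (ser_mapK isoPhi (ser_cst x)); rewrite ser_map_cst.
Qed.

Definition elem_iso (n : nat) q : nat -> U -> U :=
  fun k x => if k == 0%N then x else if k == n.+1 then q x else 0.

Lemma elem_iso_lin1 n q k : lin1 q -> lin1 (elem_iso n q k).
Proof.
move=> lq; rewrite /elem_iso; case: eqP => _; first exact: lin1_id.
by case: eqP => _; [apply: lq | apply: lin1_0fun].
Qed.

Lemma const_upto_elem_iso n q : const_upto_map n (elem_iso n q).
Proof.
move=> k /andP[k0 kn] x; rewrite /elem_iso ifN ?ifN -?lt0n //.
by rewrite neq_ltn ltnS kn.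
Qed.

Lemma ser_map_elem_iso_low n q u k : (k <= n)%N -> ser_map (elem_iso n q) u k = u k.
Proof.
move=> kn; rewrite /ser_map /cauchy big_ord_recl subn0 big1 ?addr0 // => i _.
by rewrite const_upto_elem_iso //= (leq_trans (ltn_ord i) kn).
Qed.

Lemma ser_map_elem_iso_next n q u : lin1 q -> const_upto n u ->
  ser_map (elem_iso n q) u n.+1 = u n.+1 + q (u 0%N).
Proof.
move=> lq cu; have lE k := elem_iso_lin1 n k lq.
by rewrite (ser_map_next lE (const_upto_elem_iso q) cu) /elem_iso /= eqxx.
Qed.

Lemma formal_iso_elem n q : lin1 q -> formal_iso (elem_iso n q).
Proof. by move=> lq; split=> // k; apply: elem_iso_lin1. Qed.

Lemma ser_inv_elem_iso n q x : lin1 q ->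
  const_upto n (fun k => ser_inv (elem_iso n q) k x) /\
  ser_inv (elem_iso n q) n.+1 x = - q x.
Proof.
move=> lq.
have Einv := ser_map_inv_cst x ^~ (formal_iso_elem n lq).
have low k : (k <= n)%N -> ser_inv (elem_iso n q) k x = ser_cst x k.
  by move=> kn; rewrite -Einv ser_map_elem_iso_low.
have cI : const_upto n (fun k => ser_inv (elem_iso n q) k x).
  by move=> k /andP[k0 kn]; rewrite low //; case: k k0 kn.
split=> //; have := Einv n.+1; rewrite ser_map_elem_iso_next //=.
by move/eqP; rewrite addr_eq0 => /eqP.
Qed.

Lemma formal_iso_comp Phi Psi : formal_iso Phi -> formal_iso Psi ->
  formal_iso (ser_comp Phi Psi).
Proof.
move=> [Phi0 lPhi] [Psi0 lPsi]; split=> [x|i]; last exact: ser_comp_lin1.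
by rewrite /ser_comp ser_map0 Phi0 Psi0.
Qed.

Lemma ser_map_inv_comp Phi Psi u : formal_iso Phi -> formal_iso Psi ->
  ser_map (ser_inv (ser_comp Phi Psi)) u = ser_map (ser_inv Psi) (ser_map (ser_inv Phi) u).
Proof.
move=> isoPhi isoPsi; have isoC := formal_iso_comp isoPhi isoPsi.
have [[_ lPhi] [_ lPsi]] := conj isoPhi isoPsi.
apply: (can_inj (ser_mapK isoC)); rewrite ser_map_invK // ser_map_comp //.
by rewrite !ser_map_invK.
Qed.

End FormalIsomorphisms.

Section Conjugation.
Variables (K : fieldType) (U V : lmodType K).
Implicit Types (Phi Psi : nat -> U -> U) (M : nat -> U -> U -> U).

Lemma conj2E Phi M Psi n x y :
  (forall i, lin1 (Phi i)) -> (forall i, lin1 (Psi i)) -> (forall i, bilin (M i)) ->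
  conj2 Phi M Psi n x y =
    ser_map Phi (ser_bimap M (ser_map Psi (ser_cst x)) (ser_map Psi (ser_cst y))) n.
Proof.
move=> lPhi lPsi bM; rewrite !ser_map_cst //.
rewrite /conj2 /ser_map /ser_bimap /ser_mul /cauchy; apply: eq_bigr => a _.
by rewrite lin1_sum //; apply: eq_bigr => b _; rewrite lin1_sum.
Qed.

Lemma conj2_bilin Phi M Psi n :
  (forall i, lin1 (Phi i)) -> (forall i, lin1 (Psi i)) -> (forall i, bilin (M i)) ->
  bilin (conj2 Phi M Psi n).
Proof.
move=> lPhi lPsi bM; split=> [x|y] a u v /=;
  rewrite !conj2E // ser_cst_comb (ser_map_tlinear lPsi).1.
  by rewrite (ser_bimap_tlinear_r _ bM).1 (ser_map_tlinear lPhi).1.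
by rewrite (ser_bimap_tlinear_l _ bM).1 (ser_map_tlinear lPhi).1.
Qed.

Lemma ser_bimap_conj2 Phi M Psi u v :
  (forall i, lin1 (Phi i)) -> (forall i, lin1 (Psi i)) -> (forall i, bilin (M i)) ->
  ser_bimap (conj2 Phi M Psi) u v =
    ser_map Phi (ser_bimap M (ser_map Psi u) (ser_map Psi v)).
Proof.
move=> lPhi lPsi bM; have bC i := conj2_bilin i lPhi lPsi bM.
have tPhi := ser_map_tlinear lPhi; have tPsi := ser_map_tlinear lPsi.
apply: (tlinear2_eq (A := ser_bimap _)
  (B := fun u v => ser_map Phi (ser_bimap M (ser_map Psi u) (ser_map Psi v)))).
- by move=> w; apply: ser_bimap_tlinear_l.
- by move=> w; apply: ser_bimap_tlinear_r.
- move=> w; apply: tlinear_comp => //.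
  by apply: (tlinear_comp (A := ser_bimap M ^~ _)) => //; apply: ser_bimap_tlinear_l.
- move=> w; apply: tlinear_comp => //.
  by apply: (tlinear_comp (A := ser_bimap M _)) => //; apply: ser_bimap_tlinear_r.
move=> x y; rewrite ser_bimap_cst //; apply: functional_extensionality => n.
exact: conj2E.
Qed.

Lemma conj2_0 Phi M Psi x y : formal_iso Phi -> formal_iso Psi ->
  conj2 Phi M Psi 0%N x y = M 0%N x y.
Proof. by move=> [Phi0 _] [Psi0 _]; rewrite /conj2 !big_ord1 /= Phi0 !Psi0. Qed.

Lemma eq_conj2 Phi Phi' M Psi Psi' n :
  (forall i, (i <= n)%N -> Phi i =1 Phi' i) ->
  (forall i, (i <= n)%N -> Psi i =1 Psi' i) ->
  conj2 Phi M Psi n =2 conj2 Phi' M Psi' n.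
Proof.
move=> ePhi ePsi x y; apply: eq_bigr => a _; apply: eq_bigr => b _; apply: eq_bigr => c _.
have cn : (c <= n)%N.
  by rewrite (leq_trans _ (leq_subr a n)) // (leq_trans _ (leq_subr b _)) // -ltnS.
rewrite ePhi 1?ePsi // 1?ePsi //; last by rewrite -ltnS.
by rewrite !(leq_trans (leq_subr _ _)) // leq_subr.
Qed.

Lemma conj2_comp (Phi P : nat -> U -> U) M n :
  formal_iso Phi -> formal_iso P -> (forall i, bilin (M i)) ->
  conj2 (ser_comp Phi P) M (ser_inv (ser_comp Phi P)) n =2
    conj2 Phi (conj2 P M (ser_inv P)) (ser_inv Phi) n.
Proof.
move=> isoPhi isoP bM x y; have isoC := formal_iso_comp isoPhi isoP.
have [[_ lPhi] [_ lP] [_ lC]] := And3 isoPhi isoP isoC.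
have [[_ lIPhi] [_ lIP] [_ lIC]] :=
  And3 (formal_iso_inv isoPhi) (formal_iso_inv isoP) (formal_iso_inv isoC).
have bD i := conj2_bilin i lP lIP bM.
by rewrite !conj2E // ser_bimap_conj2 // ser_map_comp // !ser_map_inv_comp.
Qed.

Lemma conj1E (Phi : nat -> V -> V) (F : nat -> U -> V) Psi n x :
  (forall i, lin1 (Phi i)) -> (forall i, lin1 (F i)) -> (forall i, lin1 (Psi i)) ->
  conj1 Phi F Psi n x = ser_map Phi (ser_map F (ser_map Psi (ser_cst x))) n.
Proof.
move=> lPhi lF lPsi; rewrite !ser_map_cst //.
by rewrite /conj1 /ser_map /cauchy; apply: eq_bigr => a _; rewrite lin1_sum.
Qed.

Lemma conj1_lin1 (Phi : nat -> V -> V) (F : nat -> U -> V) Psi n :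
  (forall i, lin1 (Phi i)) -> (forall i, lin1 (F i)) -> (forall i, lin1 (Psi i)) ->
  lin1 (conj1 Phi F Psi n).
Proof.
move=> lPhi lF lPsi a u v; rewrite !conj1E // ser_cst_comb (ser_map_tlinear lPsi).1.
by rewrite (ser_map_tlinear lF).1 (ser_map_tlinear lPhi).1.
Qed.

Lemma ser_map_conj1 (Phi : nat -> V -> V) (F : nat -> U -> V) Psi u :
  (forall i, lin1 (Phi i)) -> (forall i, lin1 (F i)) -> (forall i, lin1 (Psi i)) ->
  ser_map (conj1 Phi F Psi) u = ser_map Phi (ser_map F (ser_map Psi u)).
Proof.
move=> lPhi lF lPsi; have lC i := conj1_lin1 i lPhi lF lPsi.
apply: (tlinear_eq (A := ser_map _) (B := fun u => ser_map Phi (ser_map F (ser_map Psi u)))).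
- exact: ser_map_tlinear.
- by do 2 (apply: tlinear_comp; first exact: ser_map_tlinear); apply: ser_map_tlinear.
move=> x; rewrite ser_map_cst //; apply: functional_extensionality => n.
exact: conj1E.
Qed.

Lemma conj1_0 (Phi : nat -> V -> V) (F : nat -> U -> V) Psi x :
  formal_iso Phi -> formal_iso Psi -> conj1 Phi F Psi 0%N x = F 0%N x.
Proof. by move=> [Phi0 _] [Psi0 _]; rewrite /conj1 !big_ord1 /= Phi0 Psi0. Qed.

Lemma eq_conj1 (Phi Phi' : nat -> V -> V) (F : nat -> U -> V) Psi Psi' n :
  (forall i, (i <= n)%N -> Phi i =1 Phi' i) ->
  (forall i, (i <= n)%N -> Psi i =1 Psi' i) ->
  conj1 Phi F Psi n =1 conj1 Phi' F Psi' n.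
Proof.
move=> ePhi ePsi x; apply: eq_bigr => a _; apply: eq_bigr => b _.
rewrite ePhi 1?ePsi //; last by rewrite -ltnS.
by rewrite !(leq_trans (leq_subr _ _)) // leq_subr.
Qed.

Lemma conj1_comp (PhiS PS : nat -> V -> V) (F : nat -> U -> V) (PhiR PR : nat -> U -> U) n :
  formal_iso PhiS -> formal_iso PS -> formal_iso PhiR -> formal_iso PR ->
  (forall i, lin1 (F i)) ->
  conj1 (ser_comp PhiS PS) F (ser_inv (ser_comp PhiR PR)) n =1
    conj1 PhiS (conj1 PS F (ser_inv PR)) (ser_inv PhiR) n.
Proof.
move=> [_ lPhiS] [_ lPS] isoPhiR isoPR lF x.
have isoCR := formal_iso_comp isoPhiR isoPR.
have [[_ lIPhiR] [_ lIPR] [_ lICR]] :=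
  And3 (formal_iso_inv isoPhiR) (formal_iso_inv isoPR) (formal_iso_inv isoCR).
have lCS i := ser_comp_lin1 i lPhiS lPS.
have lG i := conj1_lin1 i lPS lF lIPR.
rewrite !conj1E // ser_map_comp // ser_map_inv_comp //.
by rewrite ser_map_conj1.
Qed.

End Conjugation.

Section DeformationEquations.
Variable K : fieldType.
Implicit Types U V : lmodType K.

Definition zinbiel_ser U (M : nat -> U -> U -> U) := forall u v w,
  ser_bimap M (ser_bimap M u v) w =
    ser_comb 1 (ser_bimap M u (ser_bimap M v w)) (ser_bimap M u (ser_bimap M w v)).

Definition morph_ser U V (MU : nat -> U -> U -> U) (MV : nat -> V -> V -> V) (F : nat -> U -> V) :=
  forall u v, ser_map F (ser_bimap MU u v) = ser_bimap MV (ser_map F u) (ser_map F v).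

Lemma series_zinbiel_ser U (M : nat -> U -> U -> U) :
  (forall i, bilin (M i)) -> series_zinbiel M -> zinbiel_ser M.
Proof.
move=> bM zM; have tl v := ser_bimap_tlinear_l v bM; have tr u := ser_bimap_tlinear_r u bM.
apply: (tlinear3_eq (A := fun u v w => ser_bimap M (ser_bimap M u v) w)
  (B := fun u v w => ser_comb 1 (ser_bimap M u (ser_bimap M v w)) (ser_bimap M u (ser_bimap M w v)))).
- by move=> v w; apply: (tlinear_comp (A := ser_bimap M ^~ w)).
- by move=> u w; apply: (tlinear_comp (A := ser_bimap M ^~ w)).
- by [].
- by move=> v w; apply: tlinear_add.
- by move=> u w; apply: tlinear_add; apply: (tlinear_comp (A := ser_bimap M u)).
- by move=> u v; apply: tlinear_add; apply: (tlinear_comp (A := ser_bimap M u)).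
move=> x y z; rewrite !ser_bimap_cst //; apply: functional_extensionality => n.
by rewrite /ser_comb ser_bimap_cstr // !ser_bimap_cstl // scale1r zM big_split.
Qed.

Lemma zinbiel_ser_conj U (Phi : nat -> U -> U) (M : nat -> U -> U -> U) :
  formal_iso Phi -> (forall i, bilin (M i)) -> zinbiel_ser M ->
  zinbiel_ser (conj2 Phi M (ser_inv Phi)).
Proof.
move=> isoPhi bM zM u v w; have [_ lPhi] := isoPhi; have [_ lInv] := formal_iso_inv isoPhi.
by rewrite !ser_bimap_conj2 // !ser_mapK // zM (ser_map_tlinear lPhi).1.
Qed.

Lemma series_morph_ser U V (MU : nat -> U -> U -> U) (MV : nat -> V -> V -> V) (F : nat -> U -> V) :
  (forall i, bilin (MU i)) -> (forall i, bilin (MV i)) -> (forall i, lin1 (F i)) ->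
  series_morph MU MV F -> morph_ser MU MV F.
Proof.
move=> bMU bMV lF mF; have tF := ser_map_tlinear lF.
apply: (tlinear2_eq (A := fun u v => ser_map F (ser_bimap MU u v))
  (B := fun u v => ser_bimap MV (ser_map F u) (ser_map F v))).
- by move=> w; apply: tlinear_comp => //; apply: ser_bimap_tlinear_l.
- by move=> w; apply: tlinear_comp => //; apply: ser_bimap_tlinear_r.
- by move=> w; apply: (tlinear_comp (A := ser_bimap MV ^~ _)) => //; apply: ser_bimap_tlinear_l.
- by move=> w; apply: (tlinear_comp (A := ser_bimap MV _)) => //; apply: ser_bimap_tlinear_r.
move=> x y; rewrite ser_bimap_cst // !ser_map_cst //.
by apply: functional_extensionality => n; apply: mF.
Qed.

Lemma morph_ser_conj U V (MU : nat -> U -> U -> U) (MV : nat -> V -> V -> V) (F : nat -> U -> V)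
    (PU : nat -> U -> U) (PV : nat -> V -> V) :
  (forall i, bilin (MU i)) -> (forall i, bilin (MV i)) -> (forall i, lin1 (F i)) ->
  formal_iso PU -> formal_iso PV -> morph_ser MU MV F ->
  morph_ser (conj2 PU MU (ser_inv PU)) (conj2 PV MV (ser_inv PV)) (conj1 PV F (ser_inv PU)).
Proof.
move=> bMU bMV lF isoPU isoPV mF u v.
have [[_ lPU] [_ lPV]] := conj isoPU isoPV.
have [[_ lIU] [_ lIV]] := conj (formal_iso_inv isoPU) (formal_iso_inv isoPV).
by rewrite !ser_bimap_conj2 // !ser_map_conj1 // !ser_mapK // mF.
Qed.

End DeformationEquations.

Section NextDegree.
Variables (K : fieldType) (U V : lmodType K) (n : nat).

Lemma zinbiel_ser_next_cocycle (D : nat -> U -> U -> U) :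
  (forall i, bilin (D i)) -> const_upto_bimap n D -> zinbiel_ser D ->
  forall x y z, d2 (D 0%N) (D 0%N) (D 0%N) (D n.+1) x y z = 0.
Proof.
move=> bD cD zD x y z.
have cDab a b : const_upto n (fun k => D k a b) by move=> k kn; rewrite cD.
have := congr1 (fun s => s n.+1) (zD (ser_cst x) (ser_cst y) (ser_cst z)).
rewrite /ser_comb /= !ser_bimap_cst // (ser_bimap_next bD cD (cDab x y) (const_upto_cst z)).
rewrite (ser_bimap_next bD cD (const_upto_cst x) (cDab y z)) (ser_bimap_next bD cD (const_upto_cst x) (cDab z y)) /=.
rewrite (bilin0r _ (bD 0%N)) !(bilin0l _ (bD 0%N)) add0r !addr0 scale1r => top.
rewrite /d2 (lin1D _ _ ((bD 0%N).1 x)) (lin1D _ _ ((bD n.+1).1 x)).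
by apply/eqP; rewrite subr_eq0 addrAC subr_eq top addrACA.
Qed.

Lemma morph_ser_next_cocycle (DU : nat -> U -> U -> U) (DV : nat -> V -> V -> V)
    (G : nat -> U -> V) :
  (forall i, bilin (DU i)) -> (forall i, bilin (DV i)) -> (forall i, lin1 (G i)) ->
  const_upto_bimap n DU -> const_upto_bimap n DV -> const_upto_map n G ->
  morph_ser DU DV G ->
  forall x y, G 0%N (DU n.+1 x y) - DV n.+1 (G 0%N x) (G 0%N y)
    - d1 (DU 0%N) (fun r s => DV 0%N (G 0%N r) s) (fun s r => DV 0%N s (G 0%N r))
         (G n.+1) x y = 0.
Proof.
move=> bDU bDV lG cDU cDV cG mG x y.
have cDUxy : const_upto n (fun k => DU k x y) by move=> k kn; rewrite cDU.
have cGa a : const_upto n (fun k => G k a) by move=> k kn; rewrite cG.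
have := congr1 (fun s => s n.+1) (mG (ser_cst x) (ser_cst y)).
rewrite ser_bimap_cst // !ser_map_cst // (ser_map_next lG cG cDUxy).
rewrite (ser_bimap_next bDV cDV (cGa x) (cGa y)) /= => top.
apply/eqP; rewrite /d1 subr_eq0; apply/eqP/(addIr (G n.+1 (DU 0%N x y))).
by rewrite addrAC top addrK addrAC subrK.
Qed.

Lemma const_upto_conj2_elem (D : nat -> U -> U -> U) (q : U -> U) :
  (forall i, bilin (D i)) -> lin1 q -> const_upto_bimap n D ->
  (forall x y, d1 (D 0%N) (D 0%N) (D 0%N) q x y = D n.+1 x y) ->
  const_upto_bimap n.+1 (conj2 (elem_iso n q) D (ser_inv (elem_iso n q))).
Proof.
move=> bD lq cD dq i /andP[i0 iSn] x y.
have isoE := formal_iso_elem n lq; have [_ lE] := isoE; have [_ lIE] := formal_iso_inv isoE.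
have [[cx topx] [cy topy]] := conj (ser_inv_elem_iso n x lq) (ser_inv_elem_iso n y lq).
have cW := const_upto_ser_bimap bD cD cx cy.
rewrite conj2E // !ser_map_cst //; have [-> | iSn'] := eqVneq i n.+1; last first.
  by rewrite ser_map_elem_iso_low ?cW ?i0 // -ltnS ltn_neqAle iSn' iSn.
rewrite ser_map_elem_iso_next // ser_bimap0 (ser_bimap_next bD cD cx cy) /= topx topy -dq /d1.
rewrite (lin1N _ ((bD 0%N).1 x)) (lin1N _ ((bD 0%N).2 y)).
by rewrite (addrAC (D 0%N x (q y))) -opprD addKr addNr.
Qed.

Lemma const_upto_conj1_elem (G : nat -> U -> V) (qU : U -> U) (qV : V -> V) :
  (forall i, lin1 (G i)) -> lin1 qU -> lin1 qV -> const_upto_map n G ->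
  (forall x, G 0%N (qU x) - qV (G 0%N x) = G n.+1 x) ->
  const_upto_map n.+1 (conj1 (elem_iso n qV) G (ser_inv (elem_iso n qU))).
Proof.
move=> lG lqU lqV cG dq i /andP[i0 iSn] x.
have isoEU := formal_iso_elem n lqU; have [_ lIEU] := formal_iso_inv isoEU.
have [_ lEV] := formal_iso_elem n lqV.
have [cx topx] := ser_inv_elem_iso n x lqU.
have cW := const_upto_ser_map lG cG cx.
rewrite conj1E // !ser_map_cst //; have [-> | iSn'] := eqVneq i n.+1; last first.
  by rewrite ser_map_elem_iso_low ?cW ?i0 // -ltnS ltn_neqAle iSn' iSn.
rewrite ser_map_elem_iso_next // ser_map0 (ser_map_next lG cG cx) /= topx -dq.
by rewrite (lin1N _ (lG 0%N)) addKr addNr.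
Qed.

End NextDegree.

Section Rigidity.
Variables (K : fieldType) (R S : lmodType K).
Variables (mR : R -> R -> R) (mS : S -> S -> S) (f : R -> S).
Variables (mRt : nat -> R -> R -> R) (mSt : nat -> S -> S -> S) (ft : nat -> R -> S).
Hypothesis deform : is_deformation mR mS f mRt mSt ft.
Hypothesis H2f : H2_vanishes mR mS f.

Let bilin_mRt i : bilin (mRt i).
Proof. by case: deform => _ [_ [_ [/(_ i)[]]]]. Qed.
Let bilin_mSt i : bilin (mSt i).
Proof. by case: deform => _ [_ [_ [/(_ i)[_ []]]]]. Qed.
Let lin1_ft i : lin1 (ft i).
Proof. by case: deform => _ [_ [_ [/(_ i)[_ []]]]]. Qed.
Let mRt0 : mRt 0%N = mR. Proof. by case: deform. Qed.
Let mSt0 : mSt 0%N = mS. Proof. by case: deform => _ []. Qed.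
Let ft0 : ft 0%N = f. Proof. by case: deform => _ [_ []]. Qed.

Let zinbiel_mRt : zinbiel_ser mRt.
Proof. by apply: series_zinbiel_ser => //; case: deform => _ [_ [_ [_ []]]]. Qed.
Let zinbiel_mSt : zinbiel_ser mSt.
Proof. by apply: series_zinbiel_ser => //; case: deform => _ [_ [_ [_ [_ []]]]]. Qed.
Let morph_ft : morph_ser mRt mSt ft.
Proof. by apply: series_morph_ser => //; case: deform => _ [_ [_ [_ [_ []]]]]. Qed.

Definition iso_pair := ((nat -> R -> R) * (nat -> S -> S))%type.

Definition conjR (P : iso_pair) := conj2 P.1 mRt (ser_inv P.1).
Definition conjS (P : iso_pair) := conj2 P.2 mSt (ser_inv P.2).
Definition conjF (P : iso_pair) := conj1 P.2 ft (ser_inv P.1).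

Definition trivial_upto n (P : iso_pair) :=
  [/\ formal_iso P.1, formal_iso P.2, const_upto_bimap n (conjR P),
      const_upto_bimap n (conjS P) & const_upto_map n (conjF P)].

Definition is_2cocycle (xi : R -> R -> R) (pi : S -> S -> S) (phi : R -> S) :=
  [/\ (forall x y z, d2 mR mR mR xi x y z = 0),
      (forall x y z, d2 mS mS mS pi x y z = 0) &
      (forall x y, f (xi x y) - pi (f x) (f y)
         - d1 mR (fun r s => mS (f r) s) (fun s r => mS s (f r)) phi x y = 0)].

Definition is_primitive xi pi phi (q : (R -> R) * (S -> S)) :=
  [/\ lin1 q.1, lin1 q.2, (forall x y, d1 mR mR mR q.1 x y = xi x y),
      (forall x y, d1 mS mS mS q.2 x y = pi x y) &
      (forall x, f (q.1 x) - q.2 (f x) - 0 = phi x)].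

Definition primitive xi pi phi : (R -> R) * (S -> S) :=
  epsilon (inhabits (id, id)) (is_primitive xi pi phi).

Lemma primitiveP xi pi phi : bilin xi -> bilin pi -> lin1 phi ->
  is_2cocycle xi pi phi -> is_primitive xi pi phi (primitive xi pi phi).
Proof.
move=> bxi bpi lphi [dxi dpi dphi]; apply: epsilon_spec.
have [xi' [pi' cob]] := H2f bxi bpi lphi dxi dpi dphi.
by exists (xi', pi').
Qed.

Definition normalize_step n (P : iso_pair) : iso_pair :=
  let q := primitive (conjR P n.+1) (conjS P n.+1) (conjF P n.+1) in
  (ser_comp (elem_iso n q.1) P.1, ser_comp (elem_iso n q.2) P.2).

Fixpoint normalizer n : iso_pair :=
  if n is m.+1 then normalize_step m (normalizer m) else (@ser_id _ R, @ser_id _ S).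

Lemma conj_deg0 (P : iso_pair) : formal_iso P.1 -> formal_iso P.2 ->
  [/\ conjR P 0%N = mR, conjS P 0%N = mS & conjF P 0%N = f].
Proof.
move=> isoR isoS; have [isoIR isoIS] := conj (formal_iso_inv isoR) (formal_iso_inv isoS).
split; do ?[apply: functional_extensionality => ?].
- by rewrite /conjR conj2_0 // mRt0.
- by rewrite /conjS conj2_0 // mSt0.
by rewrite /conjF conj1_0 // ft0.
Qed.

Lemma conj_linear P : formal_iso P.1 -> formal_iso P.2 ->
  [/\ forall i, bilin (conjR P i), forall i, bilin (conjS P i) & forall i, lin1 (conjF P i)].
Proof.
move=> isoR isoS; have [[_ lR] [_ lS]] := conj isoR isoS.
have [[_ lIR] [_ lIS]] := conj (formal_iso_inv isoR) (formal_iso_inv isoS).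
by split=> i; [apply: conj2_bilin | apply: conj2_bilin | apply: conj1_lin1].
Qed.

Lemma trivial_upto_cocycle n P : trivial_upto n P ->
  is_2cocycle (conjR P n.+1) (conjS P n.+1) (conjF P n.+1).
Proof.
case=> isoR isoS cR cS cF; have [eR eS eF] := conj_deg0 isoR isoS.
have [bR bS lF] := conj_linear isoR isoS.
split.
- by rewrite -eR; apply: zinbiel_ser_next_cocycle => //; apply: zinbiel_ser_conj.
- by rewrite -eS; apply: zinbiel_ser_next_cocycle => //; apply: zinbiel_ser_conj.
by rewrite -eR -eS -eF; apply: morph_ser_next_cocycle => //; apply: morph_ser_conj.
Qed.

Lemma trivial_upto_step n P : trivial_upto n P -> trivial_upto n.+1 (normalize_step n P).
Proof.
move=> tP; have [isoR isoS cR cS cF] := tP.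
have [bR bS lF] := conj_linear isoR isoS; have [eR eS eF] := conj_deg0 isoR isoS.
have [lqR lqS dR dS dF] := primitiveP (bR n.+1) (bS n.+1) (lF n.+1) (trivial_upto_cocycle tP).
set q := primitive _ _ _ in lqR lqS dR dS dF *.
have [isoER isoES] := conj (formal_iso_elem n lqR) (formal_iso_elem n lqS).
split=> /=.
- exact: formal_iso_comp.
- exact: formal_iso_comp.
- move=> i i_le x y; rewrite /conjR /= conj2_comp //.
  apply: const_upto_conj2_elem => //.
  by move=> {}x {}y; rewrite -eR in dR; apply: dR.
- move=> i i_le x y; rewrite /conjS /= conj2_comp //.
  apply: const_upto_conj2_elem => //.
  by move=> {}x {}y; rewrite -eS in dS; apply: dS.
move=> i i_le x; rewrite /conjF /= conj1_comp //.
apply: const_upto_conj1_elem => //.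
by move=> {}x; have := dF x; rewrite subr0 -eF; apply.
Qed.

Lemma trivial_upto_normalizer n : trivial_upto n (normalizer n).
Proof.
elim: n => [|n IHn]; last exact: trivial_upto_step.
by split; [apply: formal_iso_id | apply: formal_iso_id | case=> [|i] /andP[] ..].
Qed.

Lemma normalizer_stable m k : (k <= m)%N ->
  (normalizer m).1 k =1 (normalizer k).1 k /\ (normalizer m).2 k =1 (normalizer k).2 k.
Proof.
elim: m => [|m IHm] km; first by move: km; rewrite leqn0 => /eqP ->.
have [-> // | kSm] := eqVneq k m.+1.
have km' : (k <= m)%N by rewrite -ltnS ltn_neqAle kSm km.
have [IH1 IH2] := IHm km'.
by split=> x; rewrite /= /ser_comp ser_map_elem_iso_low ?IH1 ?IH2.
Qed.

Definition lim_isoR k := (normalizer k).1 k.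
Definition lim_isoS k := (normalizer k).2 k.

Lemma formal_iso_limit : formal_iso lim_isoR /\ formal_iso lim_isoS.
Proof.
split; split=> // i; have [[_ lR] [_ lS] _ _ _] := trivial_upto_normalizer i.
  exact: lR.
exact: lS.
Qed.

Lemma limit_conj_triv n :
  [/\ conj2 lim_isoR mRt (ser_inv lim_isoR) n =2 triv2 mR n,
      conj2 lim_isoS mSt (ser_inv lim_isoS) n =2 triv2 mS n &
      conj1 lim_isoS ft (ser_inv lim_isoR) n =1 triv1 f n].
Proof.
have [isoR isoS cR cS cF] := trivial_upto_normalizer n.
have [eR eS eF] := conj_deg0 isoR isoS.
have agR i : (i <= n)%N -> lim_isoR i =1 (normalizer n).1 i.
  by move=> i_le x; rewrite (normalizer_stable i_le).1.
have agS i : (i <= n)%N -> lim_isoS i =1 (normalizer n).2 i.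
  by move=> i_le x; rewrite (normalizer_stable i_le).2.
split=> x *.
- by rewrite (eq_conj2 _ agR (eq_ser_inv agR)) -eR triv2_const_upto.
- by rewrite (eq_conj2 _ agS (eq_ser_inv agS)) -eS triv2_const_upto.
by rewrite (eq_conj1 _ agS (eq_ser_inv agR)) -eF triv1_const_upto.
Qed.

Lemma deformation_equiv_trivial :
  deform_equiv mRt mSt ft (triv2 mR) (triv2 mS) (triv1 f).
Proof.
have [isoR isoS] := formal_iso_limit.
exists lim_isoR, (ser_inv lim_isoR), lim_isoS, (ser_inv lim_isoS).
do 2 split=> //; do 2 (split; first exact: inverse_series_inv).
split; [|split] => n x *; have [eR eS eF] := limit_conj_triv n.
- by rewrite eR.
- by rewrite eS.
by rewrite eF.
Qed.

End Rigidity.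

Theorem corollary4p2 (K : fieldType) (R S : lmodType K)
  (mR : R -> R -> R) (mS : S -> S -> S) (f : R -> S) :
  zinbiel_alg mR -> zinbiel_alg mS -> zinb_morph mR mS f ->
  H2_vanishes mR mS f -> rigid mR mS f.
Proof.
move=> _ _ _ H2f mRt mSt ft deform.
exact: deformation_equiv_trivial.
Qed.
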